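(* If a dual-convex $m\times n$ net in $I^3$ is flexible in $I^3$, then every dual-convex $m\times n$ net that is a Combescure transformation of it, and every dual-convex $m\times n$ net obtained from it by a dual-affine transformation, is flexible in $I^3$.
   Context: $I^3$ is $\mathbb{R}^3$ with coordinates $(x,y,z)$; isotropic = parallel to the $z$-axis; top view of $(x,y,z)$ is $(x,y)$. Isotropic congruences: maps $\mathbf{x}\mapsto A\mathbf{x}+\mathbf{b}$, $A=\begin{pmatrix}\cos\phi&-\sin\phi&0\\ \sin\phi&\cos\phi&0\\ c_1&c_2&1\end{pmatrix}$. Metric duality: point $P=(P^1,P^2,P^3)\leftrightarrow$ plane $P^*\colon z=P^1x+P^2y-P^3$. An $m\times n$ net: points $F_{ij}$, $0\le i\le m,0\le j\le n$, with $F_{ij},F_{i+1,j},F_{i+1,j+1},F_{i,j+1}$ consecutive vertices of a convex planar quadrilateral (face $p_{ij}$) for all $0\le i<m,0\le j<n$. Boundary vertices: $i\in\{0,m\}$ or $j\in\{0,n\}$; consecutive faces around non-boundary $F_{ij}$: $p_{i-1,j-1},p_{i,j-1},p_{ij},p_{i-1,j}$. Convex 4-hedral angle with vertex $O$, flat angles, admissible (isotropic line through $O$ meets interior) as usual; dual-convex: $m,n\ge2$ and at each non-boundary vertex the four consecutive face planes are the planes of four consecutive flat angles of an admissible convex 4-hedral angle. Curvature at non-boundary vertex with consecutive faces $p_1..p_4$: $\Omega=\frac12\sum_{k=1}^4\det(\overline{p_k^*},\overline{p_{k+1}^*})$, $p_5=p_1$. Flexible in $I^3$: there is a continuous family of $m\times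 n$ nets $F_{ij}(t)$, $t\in[0,1]$, $F_{ij}(0)=F_{ij}$, with corresponding faces isotropically congruent, corresponding non-boundary vertices of equal curvature, and not for every $t$ an isotropic congruence $C_t$ with $F_{ij}(t)=C_t(F_{ij})$ for all $i,j$. Combescure transformation: a net with the same index set whose corresponding edges are parallel. Dual-affine transformation: a projective transformation of the projective closure of $I^3$ that keeps the $z$-direction (fixes the point at infinity of the $z$-axis). *)

From HB Require Import structures.
From mathcomp Require Import all_boot all_order all_algebra.
From mathcomp Require Import all_classical all_reals all_analysis.
Set Implicit Arguments. Unset Strict Implicit. Unset Printing Implicit Defensive.
Import Order.TTheory GRing.Theory Num.Theory.
Import numFieldNormedType.Exports.
Local Open Scope ring_scope.

Section Isotropic.
Variable R : realType.

Record pt := Pt { px : R; py : R; pz : R }.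

Definition psub (P Q : pt) : pt := Pt (px P - px Q) (py P - py Q) (pz P - pz Q).
Definition padd (P Q : pt) : pt := Pt (px P + px Q) (py P + py Q) (pz P + pz Q).
Definition pscale (s : R) (P : pt) : pt := Pt (s * px P) (s * py P) (s * pz P).
Definition dot (P Q : pt) : R := px P * px Q + py P * py Q + pz P * pz Q.
Definition cross (P Q : pt) : pt :=
  Pt (py P * pz Q - pz P * py Q) (pz P * px Q - px P * pz Q) (px P * py Q - py P * px Q).
Definition pzero : pt := Pt 0 0 0.

Record icong := ICong { c_phi : R; c_c1 : R; c_c2 : R; c_b : pt }.
Definition icong_apply (C : icong) (P : pt) : pt :=
  Pt (cos (c_phi C) * px P - sin (c_phi C) * py P + px (c_b C))
     (sin (c_phi C) * px P + cos (c_phi C) * py P + py (c_b C))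
     (c_c1 C * px P + c_c2 C * py P + pz P + pz (c_b C)).

(* A, B, C, D are consecutive vertices of a (nondegenerate) convex planar
   quadrilateral: the open diagonals AC and BD cross, and A, B, C are not
   collinear. *)
Definition convex_quad (A B C D : pt) : Prop :=
  cross (psub B A) (psub C A) <> pzero /\
  exists s t : R, 0 < s < 1 /\ 0 < t < 1 /\
    padd A (pscale s (psub C A)) = padd B (pscale t (psub D B)).

(* a net: indices 0 <= i <= m, 0 <= j <= n *)
Definition net := nat -> nat -> pt.

Definition is_net (m n : nat) (F : net) : Prop :=
  forall i j, (i < m)%N -> (j < n)%N ->
    convex_quad (F i j) (F i.+1 j) (F i.+1 j.+1) (F i j.+1).

Definition face_normal (F : net) (i j : nat) : pt :=
  cross (psub (F i.+1 j) (F i j)) (psub (F i.+1 j.+1) (F i j)).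

(* top view of the metric dual point p^* of the (non-isotropic) plane of face
   p_ij, i.e. (a, b) where the plane is z = a x + b y - c *)
Definition dual_top (F : net) (i j : nat) : R * R :=
  let N := face_normal F i j in (- px N / pz N, - py N / pz N).

Definition det2 (u v : R * R) : R := u.1 * v.2 - u.2 * v.1.

Definition curvature (F : net) (i j : nat) : R :=
  let p1 := dual_top F i.-1 j.-1 in
  let p2 := dual_top F i j.-1 in
  let p3 := dual_top F i j in
  let p4 := dual_top F i.-1 j in
  (det2 p1 p2 + det2 p2 p3 + det2 p3 p4 + det2 p4 p1) / 2.

(* convex 4-hedral angle with vertex O and edge directions v 0..3 (cyclic order,
   flat angles spanned by v k, v (k+1)); l k is an inner normal of the k-th flat
   angle (vanishing on v k, v (k+1), positive on the two other edges). *)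
Definition vk (v : nat -> pt) (k : nat) : pt := v (k %% 4)%N.

Definition flat_angle_normals (v : nat -> pt) (l : nat -> pt) : Prop :=
  forall k, (k < 4)%N ->
    cross (vk v k) (vk v k.+1) <> pzero /\
    dot (l k) (vk v k) = 0 /\ dot (l k) (vk v k.+1) = 0 /\
    0 < dot (l k) (vk v k.+2) /\ 0 < dot (l k) (vk v k.+3).

(* admissible convex 4-hedral angle: the isotropic line through O meets the
   interior { O + x | forall k, dot (l k) x > 0 } *)
Definition admissible_convex_4hedral (v : nat -> pt) : Prop :=
  exists l, flat_angle_normals v l /\
    exists s : R, forall k, (k < 4)%N -> 0 < s * pz (l k).

Definition flat_plane_is_face (O : pt) (v : nat -> pt) (k : nat)
  (F : net) (i j : nat) : Prop :=
  let N := face_normal F i j in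
  dot N (psub O (F i j)) = 0 /\ dot N (vk v k) = 0 /\ dot N (vk v k.+1) = 0.

Definition dual_convex (m n : nat) (F : net) : Prop :=
  (2 <= m)%N /\ (2 <= n)%N /\ is_net m n F /\
  forall i j, (1 <= i < m)%N -> (1 <= j < n)%N ->
    exists (O : pt) (v : nat -> pt), admissible_convex_4hedral v /\
      flat_plane_is_face O v 0 F i.-1 j.-1 /\
      flat_plane_is_face O v 1 F i j.-1 /\
      flat_plane_is_face O v 2 F i j /\
      flat_plane_is_face O v 3 F i.-1 j.

Definition flexible (m n : nat) (F : net) : Prop :=
  exists Fam : R -> net,
    (forall i j, (i <= m)%N -> (j <= n)%N -> Fam 0 i j = F i j) /\
    (forall t, 0 <= t <= 1 -> is_net m n (Fam t)) /\
    (forall i j, (i <= m)%N -> (j <= n)%N ->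
       {within `[0%R, 1%R], continuous (fun t : R => px (Fam t i j))}%classic /\
       {within `[0%R, 1%R], continuous (fun t : R => py (Fam t i j))}%classic /\
       {within `[0%R, 1%R], continuous (fun t : R => pz (Fam t i j))}%classic) /\
    (forall t, 0 <= t <= 1 -> forall i j, (i < m)%N -> (j < n)%N ->
       exists C : icong,
         icong_apply C (F i j) = Fam t i j /\
         icong_apply C (F i.+1 j) = Fam t i.+1 j /\
         icong_apply C (F i.+1 j.+1) = Fam t i.+1 j.+1 /\
         icong_apply C (F i j.+1) = Fam t i j.+1) /\
    (forall t, 0 <= t <= 1 -> forall i j, (1 <= i < m)%N -> (1 <= j < n)%N ->
       curvature (Fam t) i j = curvature F i j) /\
    ~ (forall t, 0 <= t <= 1 -> exists C : icong,
         forall i j, (i <= m)%N -> (j <= n)%N -> Fam t i j = icong_apply C (F i j)).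

Definition parallel (u w : pt) : Prop := cross u w = pzero.

Definition combescure (m n : nat) (F G : net) : Prop :=
  (forall i j, (i < m)%N -> (j <= n)%N ->
     parallel (psub (G i.+1 j) (G i j)) (psub (F i.+1 j) (F i j))) /\
  (forall i j, (i <= m)%N -> (j < n)%N ->
     parallel (psub (G i j.+1) (G i j)) (psub (F i j.+1) (F i j))).

(* dual-affine transformations: projective maps of P^3 (homogeneous
   coordinates (x:y:z:1)) given by an invertible 4x4 matrix fixing the point at
   infinity (0:0:1:0) of the z-axis *)
Definition hom (P : pt) : 'cV[R]_4 :=
  \col_(k < 4) (match val k with 0 => px P | 1 => py P | 2 => pz P | _ => 1 end).
Definition ez : 'cV[R]_4 := \col_(k < 4) (if val k == 2%N then 1 else 0).

Definition dual_affine (M : 'M[R]_4) : Prop :=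
  M \in unitmx /\ exists c : R, M *m ez = c *: ez.

Definition dual_affine_image (m n : nat) (F G : net) : Prop :=
  exists M : 'M[R]_4, dual_affine M /\
    forall i j, (i <= m)%N -> (j <= n)%N ->
      let h := M *m hom (F i j) in
      h 3%:R 0 != 0 /\
      G i j = Pt (h 0 0 / h 3%:R 0) (h 1%:R 0 / h 3%:R 0) (h 2%:R 0 / h 3%:R 0).

End Isotropic.

From Pilot Require Import Defs.
From mathcomp Require Import all_boot all_order all_algebra.
From mathcomp Require Import all_classical all_reals all_analysis.
From mathcomp Require Import ring lra zify.
Import Order.TTheory GRing.Theory Num.Theory.
Import numFieldNormedType.Exports.
Set Implicit Arguments. Unset Strict Implicit. Unset Printing Implicit Defensive.
Local Open Scope ring_scope.

(* An isotropic congruence with rotation angle phi and shear (c1, c2) acts on the top view q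
   of the dual point of a non-vertical plane by q |-> rot_phi (q + (c1, c2)).  Adjacent faces
   of a flexion share an edge, so their congruences have the same rotation: the curvature at
   a vertex only depends on the shears of the four faces around it, and the flexion is
   trivial as soon as all face shears agree.  Forgetting the rotations, the vertical
   displacements of the vertices give a flexion by vertical shears with the same curvatures.
   For a Combescure transform G, whose faces have the same dual points as those of F, the
   shears integrate along the parallel edges of G to vertical displacements of G.  For a
   dual-affine image G = M(F), M maps vertical displacements to vertical ones and acts on the
   dual points of the planes through a vertex V by an affine map whose Jacobian only depends
   on the top view of V, so both curvatures at V are rescaled by the same factor.  In both
   cases the new flexion induces the shears of the old one, hence is nontrivial. *)

Section PointGeometry.
Variable R : realType.
Implicit Types (A B C D P Q u w N : pt R) (p q : R * R) (K L : icong R).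

Lemma pt_eta P : P = Pt (px P) (py P) (pz P). Proof. by case: P. Qed.

Definition top_view P : R * R := (px P, py P).
Definition normal3 A B D : pt R := cross (psub B A) (psub D A).
Definition dual_point N : R * R := (- px N / pz N, - py N / pz N).
Definition on_plane q (e : R) P : Prop := pz P = q.1 * px P + q.2 * py P + e.

Lemma sqr_add_eq0 (x y : R) : x ^+ 2 + y ^+ 2 = 0 -> x = 0 /\ y = 0.
Proof.
move/eqP; rewrite paddr_eq0 ?sqr_ge0 // !sqrf_eq0.
by case/andP => /eqP -> /eqP ->.
Qed.

Lemma dot_self_eq0 P : dot P P = 0 -> P = pzero R.
Proof.
move=> h; have : (px P ^+ 2 + py P ^+ 2) + pz P ^+ 2 == 0.
  by rewrite -h /dot /=; apply/eqP; ring.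
rewrite paddr_eq0 ?addr_ge0 ?sqr_ge0 // paddr_eq0 ?sqr_ge0 // !sqrf_eq0.
by case/andP => /andP[/eqP x0 /eqP y0] /eqP z0; rewrite [P]pt_eta x0 y0 z0.
Qed.

Lemma orth2_eq0 (a1 a2 : R) p q :
  a1 * p.1 + a2 * p.2 = 0 -> a1 * q.1 + a2 * q.2 = 0 -> det2 p q != 0 -> a1 = 0 /\ a2 = 0.
Proof.
move=> hp hq pq; split; apply/eqP; rewrite -(mulIr_eq0 _ (mulIf pq)).
  by apply/eqP; transitivity (q.2 * (a1 * p.1 + a2 * p.2) - p.2 * (a1 * q.1 + a2 * q.2));
    [rewrite /det2; ring | rewrite hp hq; ring].
by apply/eqP; transitivity (p.1 * (a1 * q.1 + a2 * q.2) - q.1 * (a1 * p.1 + a2 * p.2));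
  [rewrite /det2; ring | rewrite hp hq; ring].
Qed.


Lemma psub_eq0 P Q : psub P Q = pzero R -> P = Q.
Proof.
case=> /subr0_eq x /subr0_eq y /subr0_eq z.
by rewrite [P]pt_eta [Q]pt_eta x y z.
Qed.

Definition edge_ratio u w : R := dot u w / dot w w.

Lemma parallel_scale u w : parallel u w -> w <> pzero R -> u = pscale (edge_ratio u w) w.
Proof.
move=> uw w0; have ww : dot w w != 0 by apply: contra_notN w0 => /eqP/dot_self_eq0.
have : psub (pscale (dot w w) u) (pscale (dot u w) w) = cross w (cross u w).
  by rewrite /psub /pscale /cross /dot /=; congr Pt; ring.
rewrite uw /cross /= !mulr0 subrr => /psub_eq0 [ex ey ez].
by rewrite [u]pt_eta /pscale /edge_ratio; congr Pt; apply: (mulfI ww); rewrite ?ex ?ey ?ez; field.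
Qed.

Lemma orth_parallel_cross N u w : dot N u = 0 -> dot N w = 0 -> parallel N (cross u w).
Proof.
move=> Nu Nw; have : cross N (cross u w) = psub (pscale (dot N w) u) (pscale (dot N u) w).
  by rewrite /psub /pscale /cross /dot /=; congr Pt; ring.
by rewrite Nu Nw /parallel => ->; rewrite /psub /pscale /= !mul0r subrr.
Qed.

Definition add2 p q : R * R := (p.1 + q.1, p.2 + q.2).
Definition rot2 (phi : R) p : R * R :=
  (cos phi * p.1 - sin phi * p.2, sin phi * p.1 + cos phi * p.2).
Definition shear K : R * R := (c_c1 K, c_c2 K).
Definition omega4 (q0 q1 q2 q3 : R * R) : R :=
  (det2 q0 q1 + det2 q1 q2 + det2 q2 q3 + det2 q3 q0) / 2.

Lemma rot2K phi : cancel (rot2 phi) (rot2 (- phi)).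
Proof.
move=> [x y]; rewrite /rot2 /= cosN sinN.
by congr pair; rewrite -[RHS]mul1r -(cos2Dsin2 phi); ring.
Qed.

Lemma det2_rot2 phi p q : det2 (rot2 phi p) (rot2 phi q) = det2 p q.
Proof. by rewrite -[RHS]mul1r -(cos2Dsin2 phi) /det2 /rot2 /=; ring. Qed.

Lemma omega4_rot2 phi q0 q1 q2 q3 :
  omega4 (rot2 phi q0) (rot2 phi q1) (rot2 phi q2) (rot2 phi q3) = omega4 q0 q1 q2 q3.
Proof. by rewrite /omega4 !det2_rot2. Qed.

Lemma normal3_icong K A B D (N := normal3 A B D)
    (r := rot2 (c_phi K) (top_view N)) (s := rot2 (c_phi K) (shear K)) :
  normal3 (icong_apply K A) (icong_apply K B) (icong_apply K D) =
  Pt (r.1 - s.1 * pz N) (r.2 - s.2 * pz N) (pz N).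
Proof.
rewrite /r /s /N /rot2 /normal3 /cross /psub /icong_apply /=; congr Pt; [ring | ring |].
by rewrite -[RHS]mul1r -(cos2Dsin2 (c_phi K)); ring.
Qed.

Lemma pz_normal3_icong K A B D :
  pz (normal3 (icong_apply K A) (icong_apply K B) (icong_apply K D)) = pz (normal3 A B D).
Proof. by rewrite normal3_icong. Qed.

Lemma dual_point_icong K A B D : pz (normal3 A B D) != 0 ->
  dual_point (normal3 (icong_apply K A) (icong_apply K B) (icong_apply K D)) =
  rot2 (c_phi K) (add2 (dual_point (normal3 A B D)) (shear K)).
Proof.
rewrite normal3_icong; set N := normal3 A B D => nz.
by rewrite /dual_point /rot2 /add2 /=; congr pair; field.
Qed.


Lemma icong_affine_comb K A D s :
  padd (icong_apply K A) (pscale s (psub (icong_apply K D) (icong_apply K A))) =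
  icong_apply K (padd A (pscale s (psub D A))).
Proof. by rewrite /icong_apply /padd /pscale /psub /=; congr Pt; ring. Qed.

Lemma convex_quad_icong K A B C D : convex_quad A B C D ->
  convex_quad (icong_apply K A) (icong_apply K B) (icong_apply K C) (icong_apply K D).
Proof.
case=> nd [s [t [s01 [t01 diag]]]]; split; last first.
  by exists s, t; do 2!split => //; rewrite !icong_affine_comb diag.
rewrite -/(normal3 _ _ _) normal3_icong => -[r1 r2 z0]; apply: nd.
move: r1 r2; rewrite z0 !mulr0 !subr0 => r1 r2.
have /(can_inj (rot2K _)) [x0 y0] :
    rot2 (c_phi K) (top_view (normal3 A B C)) = rot2 (c_phi K) (0, 0).
  by rewrite /rot2 /= !mulr0 subrr addr0 r1 r2.
by rewrite [cross _ _]pt_eta /= x0 y0 z0.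
Qed.

Lemma cross_eq0_of_dependent (a b : R) u w : pscale a u = pscale b w -> a != 0 ->
  cross u w = pzero R.
Proof.
move=> [ex ey ez] a0; have -> : u = pscale (b / a) w.
  by rewrite [u]pt_eta /pscale; congr Pt; apply: (mulfI a0); rewrite ?ex ?ey ?ez; field.
by rewrite /cross /pscale /pzero /=; congr Pt; ring.
Qed.

Lemma convex_quad_edges A B C D : convex_quad A B C D ->
  [/\ psub B A <> pzero R, psub C B <> pzero R, psub D A <> pzero R & psub C D <> pzero R].
Proof.
case=> nd [s [t [/andP[s0 s1] [/andP[t0 t1] diag]]]].
move: (diag) => [ex ey ez]; split=> /psub_eq0 e; apply: nd.
- by rewrite e /cross /psub /pzero /= !subrr; congr Pt; ring.
- by rewrite e; apply: (@cross_eq0_of_dependent 1 1) => //; rewrite oner_eq0.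
- apply: (@cross_eq0_of_dependent (1 - t) s); last by rewrite subr_eq0 gt_eqF.
  by move: ex ey ez; rewrite e /pscale /psub => ex ey ez; congr Pt => /=; lra.
- transitivity (cross (psub A C) (psub B C)); first by rewrite /cross /psub /=; congr Pt; ring.
  apply: (@cross_eq0_of_dependent (1 - s) (1 - t)); last by rewrite subr_eq0 gt_eqF.
  by move: ex ey ez; rewrite -e /pscale /psub => ex ey ez; congr Pt => /=; lra.
Qed.

Lemma dual_point_on_plane q e A B D : on_plane q e A -> on_plane q e B -> on_plane q e D ->
  pz (normal3 A B D) != 0 -> dual_point (normal3 A B D) = q.
Proof.
case: q => q1 q2; rewrite /on_plane /= => hA hB hD.
rewrite /dual_point /normal3 /cross /psub /= hA hB hD => nz.
by congr pair; field; move: nz; apply: contra_neq => <-; ring.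
Qed.

Lemma convex_quad_on_plane A B C D (q := dual_point (normal3 A B C)) :
  convex_quad A B C D -> pz (normal3 A B C) != 0 ->
  exists e, [/\ on_plane q e A, on_plane q e B, on_plane q e C & on_plane q e D].
Proof.
case=> _ [s [t [_ [/andP[t0 _] [ex ey ez]]]]] nz; exists (pz A - q.1 * px A - q.2 * py A).
have hA : on_plane q (pz A - q.1 * px A - q.2 * py A) A by rewrite /on_plane; ring.
have hB : on_plane q (pz A - q.1 * px A - q.2 * py A) B.
  by rewrite /on_plane /q /dual_point /normal3 /cross /psub /=; field.
have hC : on_plane q (pz A - q.1 * px A - q.2 * py A) C.
  by rewrite /on_plane /q /dual_point /normal3 /cross /psub /=; field.
split=> //; move: hA hB hC; rewrite /on_plane.
have t_neq0 : t != 0 by rewrite gt_eqF.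
have xD : px D = (px A + s * (px C - px A) - px B) / t + px B by rewrite ex; field.
have yD : py D = (py A + s * (py C - py A) - py B) / t + py B by rewrite ey; field.
have zD : pz D = (pz A + s * (pz C - pz A) - pz B) / t + pz B by rewrite ez; field.
by rewrite xD yD zD => hA hB hC; rewrite hB hC; field.
Qed.


Lemma top_view_neq_normal3 A B D : pz (normal3 A B D) != 0 ->
  [/\ top_view A != top_view B, top_view A != top_view D & top_view B != top_view D].
Proof.
move=> nz; split; apply: contraNneq nz => -[ex ey];
  by rewrite /normal3 /cross /psub /=; apply/eqP; rewrite ex ey; ring.
Qed.

Lemma icong_rot_eq K L P Q : icong_apply K P = icong_apply L P ->
  icong_apply K Q = icong_apply L Q -> top_view P != top_view Q ->
  cos (c_phi K) = cos (c_phi L) /\ sin (c_phi K) = sin (c_phi L).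
Proof.
move=> eP eQ PQ; set u1 := px P - px Q; set u2 := py P - py Q.
have u0 : det2 (u1, - u2) (u2, u1) != 0.
  apply: contra_neq PQ => h; have [/subr0_eq x0 /subr0_eq y0] : u1 = 0 /\ u2 = 0.
    by apply: sqr_add_eq0; rewrite -h /det2 /=; ring.
  by rewrite /top_view x0 y0.
have ex : (cos (c_phi K) - cos (c_phi L)) * u1 + (sin (c_phi K) - sin (c_phi L)) * - u2 = 0.
  transitivity ((px (icong_apply K P) - px (icong_apply K Q)) -
                (px (icong_apply L P) - px (icong_apply L Q))).
    by rewrite /icong_apply /u1 /u2 /=; ring.
  by rewrite eP eQ subrr.
have ey : (cos (c_phi K) - cos (c_phi L)) * u2 + (sin (c_phi K) - sin (c_phi L)) * u1 = 0.
  transitivity ((py (icong_apply K P) - py (icong_apply K Q)) -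
                (py (icong_apply L P) - py (icong_apply L Q))).
    by rewrite /icong_apply /u1 /u2 /=; ring.
  by rewrite eP eQ subrr.
by have [/subr0_eq -> /subr0_eq ->] := orth2_eq0 (p := (u1, - u2)) (q := (u2, u1)) ex ey u0.
Qed.

Lemma icong_eq K L P Q : icong_apply K P = icong_apply L P ->
  icong_apply K Q = icong_apply L Q -> top_view P != top_view Q ->
  shear K = shear L -> icong_apply K =1 icong_apply L.
Proof.
move=> eP eQ PQ [k1 k2] X; have [ec es] := icong_rot_eq eP eQ PQ.
move: eP; rewrite /icong_apply ec es k1 k2 => -[/addrI bx /addrI b_y /addrI bz].
by rewrite bx b_y bz.
Qed.

Lemma icong_shear_eq K L A B D : pz (icong_apply K A) = pz (icong_apply L A) ->
  pz (icong_apply K B) = pz (icong_apply L B) -> pz (icong_apply K D) = pz (icong_apply L D) ->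
  pz (normal3 A B D) != 0 -> shear K = shear L.
Proof.
move=> eA eB eD nz.
have e P : pz (icong_apply K P) - pz (icong_apply L P) =
    (c_c1 K - c_c1 L) * px P + (c_c2 K - c_c2 L) * py P + (pz (c_b K) - pz (c_b L)).
  by rewrite /icong_apply /=; ring.
have eB' : (c_c1 K - c_c1 L) * (px B - px A) + (c_c2 K - c_c2 L) * (py B - py A) = 0.
  transitivity ((pz (icong_apply K B) - pz (icong_apply L B)) -
                (pz (icong_apply K A) - pz (icong_apply L A))); first by rewrite !e; ring.
  by rewrite eA eB !subrr.
have eD' : (c_c1 K - c_c1 L) * (px D - px A) + (c_c2 K - c_c2 L) * (py D - py A) = 0.
  transitivity ((pz (icong_apply K D) - pz (icong_apply L D)) -
                (pz (icong_apply K A) - pz (icong_apply L A))); first by rewrite !e; ring.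
  by rewrite eA eD !subrr.
have [/subr0_eq k1 /subr0_eq k2] := orth2_eq0
  (p := (px B - px A, py B - py A)) (q := (px D - px A, py D - py A)) eB' eD' nz.
by rewrite /shear k1 k2.
Qed.


Lemma normal3_scale A B C (A' B' C' : pt R) (a b : R) :
  psub B' A' = pscale a (psub B A) -> psub C' B' = pscale b (psub C B) ->
  normal3 A' B' C' = pscale (a * b) (normal3 A B C).
Proof.
have edges P Q S : normal3 P Q S = cross (psub Q P) (psub S Q).
  by rewrite /normal3 /cross /psub /=; congr Pt; ring.
by move=> eAB eBC; rewrite !edges eAB eBC /cross /pscale /=; congr Pt; ring.
Qed.

Lemma dual_point_scale (s : R) N : pz (pscale s N) != 0 -> dual_point (pscale s N) = dual_point N.
Proof.
rewrite /= mulf_eq0 negb_or => /andP[s0 N0].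
by rewrite /dual_point /=; congr pair; field; rewrite N0 s0.
Qed.

Lemma icong_vdisp K P :
  pz (icong_apply K P) - pz P = c_c1 K * px P + c_c2 K * py P + pz (c_b K).
Proof. by rewrite /icong_apply /=; ring. Qed.

End PointGeometry.

Section WithinContinuity.
Variables (R : realType) (A : set R).

Lemma within_continuous_cst (k : R) : {within A, continuous (fun _ : R => k)}%classic.
Proof. by move=> x; exact: cst_continuous. Qed.

Lemma within_continuousD (f g : R -> R) : {within A, continuous f}%classic ->
  {within A, continuous g}%classic -> {within A, continuous (fun t => f t + g t)}%classic.
Proof. by move=> cf cg x; exact: continuousD (cf x) (cg x). Qed.

Lemma within_continuousB (f g : R -> R) : {within A, continuous f}%classic ->
  {within A, continuous g}%classic -> {within A, continuous (fun t => f t - g t)}%classic.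
Proof. by move=> cf cg x; exact: continuousB (cf x) (cg x). Qed.

Lemma within_continuousM (f g : R -> R) : {within A, continuous f}%classic ->
  {within A, continuous g}%classic -> {within A, continuous (fun t => f t * g t)}%classic.
Proof. by move=> cf cg x; exact: continuousM (cf x) (cg x). Qed.

Lemma within_continuous_sum n (f : nat -> R -> R) :
  (forall k, (k < n)%N -> {within A, continuous (f k)}%classic) ->
  {within A, continuous (fun t => \sum_(k < n) f k t)}%classic.
Proof.
elim: n => [|n IHn] cf.
  by under eq_fun do rewrite big_ord0; exact: within_continuous_cst.
under eq_fun do rewrite big_ord_recr /=.
by apply: within_continuousD; [apply: IHn => k kn; apply: cf; exact: ltnW | exact: cf].
Qed.

End WithinContinuity.

Section Nets.
Variable R : realType.
Implicit Types (X Y : net R) (K L : icong R) (P : pt R) (h dh dv : nat -> nat -> R).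

(* The face normal and the inner normal l k of the flat angle are both parallel to the cross
   product of its two edges, and l k is not horizontal by admissibility. *)
Lemma admissible_face_nonvertical O v k X a b : admissible_convex_4hedral v -> (k < 4)%N ->
  flat_plane_is_face O v k X a b -> face_normal X a b <> pzero R ->
  pz (face_normal X a b) != 0.
Proof.
case=> l [normals [s pos]] k4 [_ [Nv Nw]] N0.
have [vw0 [lv [lw _]]] := normals k k4.
have lz : pz (l k) != 0 by apply: contraTneq (pos k k4) => ->; rewrite mulr0 ltxx.
have eN := parallel_scale (orth_parallel_cross Nv Nw) vw0.
have el := parallel_scale (orth_parallel_cross lv lw) vw0.
move: lz; rewrite el eN /= mulf_eq0 negb_or => /andP[_ Xz]; rewrite mulf_neq0 //.
apply/eqP => r0; apply: N0; rewrite eN r0 /pscale /pzero /=; congr Pt; ring.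
Qed.

(* Every face is one of the four faces around some interior vertex. *)
Lemma dual_convex_nonvertical m n X : dual_convex m n X ->
  forall i j, (i < m)%N -> (j < n)%N -> pz (face_normal X i j) != 0.
Proof.
case=> m2 [n2 [net faces]] i j im jn; have [nd _] := net i j im jn.
case: i im nd => [|i] im nd; case: j jn nd => [|j] jn nd.
- have [apex [v [adm [f _]]]] := faces 1%N 1%N m2 n2.
  exact: admissible_face_nonvertical adm _ f nd.
- have [apex [v [adm [_ [_ [_ f]]]]]] := faces 1%N j.+1 m2 jn.
  exact: admissible_face_nonvertical adm _ f nd.
- have [apex [v [adm [_ [f _]]]]] := faces i.+1 1%N im n2.
  exact: admissible_face_nonvertical adm _ f nd.
- have [apex [v [adm [_ [_ [f _]]]]]] := faces i.+1 j.+1 im jn.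
  exact: admissible_face_nonvertical adm _ f nd.
Qed.


Definition face_icong X Y (i j : nat) K : Prop :=
  icong_apply K (X i j) = Y i j /\ icong_apply K (X i.+1 j) = Y i.+1 j /\
  icong_apply K (X i.+1 j.+1) = Y i.+1 j.+1 /\ icong_apply K (X i j.+1) = Y i j.+1.

Definition face_vertex (i j k l : nat) : bool :=
  ((k == i) || (k == i.+1)) && ((l == j) || (l == j.+1)).

Lemma face_icongP X Y i j K : face_icong X Y i j K <->
  forall k l, face_vertex i j k l -> icong_apply K (X k l) = Y k l.
Proof.
split=> [[e1 [e2 [e3 e4]]] k l /andP[/orP[]/eqP-> /orP[]/eqP->] // | h].
by do !split; apply: h; rewrite /face_vertex !eqxx ?orbT.
Qed.

Lemma face_vertex_corners i j : [/\ face_vertex i j i j, face_vertex i j i.+1 j,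
  face_vertex i j i.+1 j.+1 & face_vertex i j i j.+1].
Proof. by rewrite /face_vertex !eqxx !orbT. Qed.

Lemma dual_top_icong X Y i j K : face_icong X Y i j K -> pz (face_normal X i j) != 0 ->
  dual_top Y i j = rot2 (c_phi K) (add2 (dual_top X i j) (shear K)).
Proof.
by case=> e1 [e2 [e3 _]]; rewrite /dual_top /face_normal -e1 -e2 -e3; exact: dual_point_icong.
Qed.

Lemma pz_face_normal_icong X Y i j K : face_icong X Y i j K ->
  pz (face_normal Y i j) = pz (face_normal X i j).
Proof.
by case=> e1 [e2 [e3 _]]; rewrite /face_normal -e1 -e2 -e3; exact: pz_normal3_icong.
Qed.

Lemma convex_face_icong X Y i j K : face_icong X Y i j K ->
  convex_quad (X i j) (X i.+1 j) (X i.+1 j.+1) (X i j.+1) ->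
  convex_quad (Y i j) (Y i.+1 j) (Y i.+1 j.+1) (Y i j.+1).
Proof. by case=> <- [<- [<- <-]]; exact: convex_quad_icong. Qed.

Lemma curvatureE X i j : curvature X i.+1 j.+1 =
  omega4 (dual_top X i j) (dual_top X i.+1 j) (dual_top X i.+1 j.+1) (dual_top X i j.+1).
Proof. by []. Qed.

Lemma eq_rot2 (a b : R) : cos a = cos b -> sin a = sin b -> rot2 a = rot2 b.
Proof. by move=> ca sa; rewrite /rot2 ca sa. Qed.

(* Adjacent faces share an edge, so their congruences have the same rotation, which
   omega4 ignores. *)
Lemma curvature_face_icong X Y i j K0 K1 K2 K3 :
  face_icong X Y i j K0 -> face_icong X Y i.+1 j K1 ->
  face_icong X Y i.+1 j.+1 K2 -> face_icong X Y i j.+1 K3 ->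
  pz (face_normal X i j) != 0 -> pz (face_normal X i.+1 j) != 0 ->
  pz (face_normal X i.+1 j.+1) != 0 -> pz (face_normal X i j.+1) != 0 ->
  curvature Y i.+1 j.+1 = omega4 (add2 (dual_top X i j) (shear K0))
    (add2 (dual_top X i.+1 j) (shear K1)) (add2 (dual_top X i.+1 j.+1) (shear K2))
    (add2 (dual_top X i j.+1) (shear K3)).
Proof.
move=> f0 f1 f2 f3 n0 n1 n2 n3.
rewrite curvatureE (dual_top_icong f0 n0) (dual_top_icong f1 n1)
  (dual_top_icong f2 n2) (dual_top_icong f3 n3).
case: f0 f1 f2 f3 => [_ [b0 [c0 _]]] [a1 [_ [c1 d1]]] [a2 [b2 [_ d2]]] [_ [b3 [c3 _]]].
have [_ _ t0] := top_view_neq_normal3 n0.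
have [t1 _ _] := top_view_neq_normal3 n2.
have [_ _ t3] := top_view_neq_normal3 n3.
have [c01 s01] := icong_rot_eq (etrans b0 (esym a1)) (etrans c0 (esym d1)) t0.
have [c12 s12] := icong_rot_eq (etrans d1 (esym a2)) (etrans c1 (esym b2)) t1.
have [c23 s23] := icong_rot_eq (etrans a2 (esym b3)) (etrans d2 (esym c3)) t3.
by rewrite -(eq_rot2 c23 s23) -(eq_rot2 c12 s12) -(eq_rot2 c01 s01) omega4_rot2.
Qed.

Lemma grid_ind m n (P : nat -> nat -> Prop) : P 0%N 0%N ->
  (forall j, (j.+1 < n)%N -> P 0%N j -> P 0%N j.+1) ->
  (forall i j, (i.+1 < m)%N -> (j < n)%N -> P i j -> P i.+1 j) ->
  forall i j, (i < m)%N -> (j < n)%N -> P i j.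
Proof.
move=> P00 Pcol Prow; elim=> [|i IHi] j im jn.
  by elim: j jn => [//|j IHj] jn; apply: Pcol => //; apply: IHj; exact: ltnW.
by apply: Prow => //; apply: IHi => //; exact: ltnW.
Qed.

(* Congruences of adjacent faces agree on the common edge, whose top view is nondegenerate,
   hence coincide as soon as their shears do. *)
Lemma face_icong_global m n X Y (k : R * R) : (0 < m)%N -> (0 < n)%N ->
  (forall i j, (i < m)%N -> (j < n)%N -> pz (face_normal X i j) != 0) ->
  (forall i j, (i < m)%N -> (j < n)%N -> exists2 K, face_icong X Y i j K & shear K = k) ->
  exists K, forall i j, (i <= m)%N -> (j <= n)%N -> Y i j = icong_apply K (X i j).
Proof.
move=> m0 n0 nv faces; have [K0 f00 s00] := faces 0%N 0%N m0 n0.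
have same : forall i j, (i < m)%N -> (j < n)%N -> forall K,
    face_icong X Y i j K -> shear K = k -> icong_apply K =1 icong_apply K0.
  apply: grid_ind.
  - move=> K [a [b _]] sK; case: f00 => [a' [b' _]].
    have [t01 _ _] := top_view_neq_normal3 (nv _ _ m0 n0).
    exact: (icong_eq (etrans a (esym a')) (etrans b (esym b')) t01 (etrans sK (esym s00))).
  - move=> j jn IH K [a [b _]] sK x.
    have [K' f' s'] := faces 0%N j m0 (ltnW jn); rewrite -(IH K' f' s').
    case: f' => [_ [_ [c' d']]]; have [tab _ _] := top_view_neq_normal3 (nv _ _ m0 jn).
    exact: (icong_eq (etrans a (esym d')) (etrans b (esym c')) tab (etrans sK (esym s'))).
  - move=> i j im jn IH K [a [_ [_ d]]] sK x.
    have [K' f' s'] := faces i j (ltnW im) jn; rewrite -(IH K' f' s').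
    case: f' => [_ [b' [c' _]]]; have [_ _ tbc] := top_view_neq_normal3 (nv _ _ (ltnW im) jn).
    exact: (icong_eq (etrans a (esym b')) (etrans d (esym c')) tbc (etrans sK (esym s'))).
exists K0 => i j im jn.
have am : (minn i m.-1 < m)%N by lia.
have bn : (minn j n.-1 < n)%N by lia.
have [K f sK] := faces _ _ am bn; rewrite -(same _ _ am bn K f sK).
by move/face_icongP: f => -> //; rewrite /face_vertex; lia.
Qed.


Definition lift_net X h : net R :=
  fun i j => Pt (px (X i j)) (py (X i j)) (pz (X i j) + h i j).

Definition vshear (a b d : R) : icong R := ICong 0 a b (Pt 0 0 d).

Lemma vshearE a b d P :
  icong_apply (vshear a b d) P = Pt (px P) (py P) (pz P + (a * px P + b * py P + d)).
Proof. by rewrite /icong_apply /= cos0 sin0; congr Pt; ring. Qed.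

Lemma face_icong_lift X h i j a b d :
  (forall k l, face_vertex i j k l -> h k l = a * px (X k l) + b * py (X k l) + d) ->
  face_icong X (lift_net X h) i j (vshear a b d).
Proof. by move=> hv; apply/face_icongP => k l kl; rewrite vshearE /lift_net hv. Qed.

Lemma flexible_lift m n X (h : R -> nat -> nat -> R) : is_net m n X ->
  (forall i j, (i <= m)%N -> (j <= n)%N -> h 0 i j = 0) ->
  (forall i j, (i <= m)%N -> (j <= n)%N ->
     {within `[0%R, 1%R], continuous (fun t => h t i j)}%classic) ->
  (forall t, 0 <= t <= 1 -> forall i j, (i < m)%N -> (j < n)%N ->
     exists K, face_icong X (lift_net X (h t)) i j K) ->
  (forall t, 0 <= t <= 1 -> forall i j, (1 <= i < m)%N -> (1 <= j < n)%N ->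
     curvature (lift_net X (h t)) i j = curvature X i j) ->
  ~ (forall t, 0 <= t <= 1 -> exists K : icong R, forall i j, (i <= m)%N -> (j <= n)%N ->
       lift_net X (h t) i j = icong_apply K (X i j)) ->
  flexible m n X.
Proof.
move=> net h0 cont faces curv nontriv; exists (fun t => lift_net X (h t)); split.
  by move=> i j im jn; rewrite /lift_net h0 // addr0 -pt_eta.
split.
  move=> t t01 i j im jn; have [K f] := faces t t01 i j im jn.
  exact: convex_face_icong f (net i j im jn).
split.
  move=> i j im jn; split; first exact: within_continuous_cst.
  split; first exact: within_continuous_cst.
  by apply: within_continuousD; [exact: within_continuous_cst | exact: cont].
split; first exact: faces.
by split; [exact: curv | exact: nontriv].
Qed.


Definition grid_potential dh dv (i j : nat) : R := \sum_(k < i) dh k 0%N + \sum_(l < j) dv i l.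

Lemma grid_potentialS2 dh dv i j :
  grid_potential dh dv i j.+1 = grid_potential dh dv i j + dv i j.
Proof. by rewrite /grid_potential big_ord_recr addrA. Qed.

Lemma grid_potentialS1 m n dh dv :
  (forall i j, (i < m)%N -> (j < n)%N -> dh i j + dv i.+1 j = dv i j + dh i j.+1) ->
  forall i j, (i < m)%N -> (j <= n)%N ->
  grid_potential dh dv i.+1 j = grid_potential dh dv i j + dh i j.
Proof.
move=> closed i j im; elim: j => [_|j IHj jn].
  by rewrite /grid_potential !big_ord0 !addr0 big_ord_recr.
by rewrite !grid_potentialS2 IHj ?(ltnW jn) // -addrA closed // addrA.
Qed.

Lemma within_continuous_grid_potential (A : set R) (dh dv : R -> nat -> nat -> R) i j :
  (forall k, (k < i)%N -> {within A, continuous (fun t => dh t k 0%N)}%classic) ->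
  (forall l, (l < j)%N -> {within A, continuous (fun t => dv t i l)}%classic) ->
  {within A, continuous (fun t => grid_potential (dh t) (dv t) i j)}%classic.
Proof.
move=> ch cv; apply: within_continuousD.
  exact: (within_continuous_sum (f := fun k t => dh t k 0%N)).
exact: (within_continuous_sum (f := fun l t => dv t i l)).
Qed.

End Nets.

Section ProjectiveMaps.
Variable R : realType.

Lemma mulmx4 p q (A : 'M[R]_(p, 4)) (B : 'M[R]_(4, q)) i j :
  (A *m B) i j = A i 0 * B 0 j + A i 1 * B 1 j + A i 2%:R * B 2%:R j + A i 3%:R * B 3%:R j.
Proof.
rewrite mxE !big_ord_recl big_ord0 addr0 !addrA.
by congr (_ + _ + _ + _); congr (_ * _); congr (_ _ _); apply/val_inj.
Qed.

Definition row4 (a b d e : R) : 'rV[R]_4 :=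
  \row_(k < 4) match val k with 0 => a | 1 => b | 2 => d | _ => e end.

Lemma row_hom (a b d e : R) (P : pt R) :
  (row4 a b d e *m Defs.hom P) 0 0 = a * px P + b * py P + d * pz P + e.
Proof. by rewrite mulmx4 !mxE mulr1. Qed.

Variables (M : 'M[R]_4) (c : R).
Hypothesis M_unit : M \in unitmx.
Hypothesis M_ez : M *m ez R = c *: ez R.

Definition projects (P Q : pt R) : Prop :=
  let h := M *m Defs.hom P in
  h 3%:R 0 != 0 /\ Q = Pt (h 0 0 / h 3%:R 0) (h 1%:R 0 / h 3%:R 0) (h 2%:R 0 / h 3%:R 0).

Definition proj_weight (P : pt R) : R := (M *m Defs.hom P) 3%:R 0.

Lemma M_col2 k : M k 2%:R = c * ez R k 0.
Proof.
by have := congr1 (fun (B : 'M[R]_(4, 1)) => B k 0) M_ez; rewrite /= mulmx4 !mxE /=; lra.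
Qed.

Lemma ez_scale_neq0 : c != 0.
Proof.
apply/eqP => c0; have := congr1 (fun (B : 'M[R]_(4, 1)) => (invmx M *m B) 2%:R 0) M_ez.
by rewrite /= mulmxA mulVmx // mul1mx c0 scale0r mulmx0 !mxE /= => /eqP; rewrite oner_eq0.
Qed.

Lemma row_invmx_col2 (f : 'rV[R]_4) : (f *m invmx M) 0 2%:R = f 0 2%:R / c.
Proof.
have c0 := ez_scale_neq0; have := congr1 (fun (B : 'rV[R]_4) => B 0 2%:R) (mulmxKV M_unit f).
by rewrite /= mulmx4 !M_col2 !mxE /= => <-; field.
Qed.

Lemma row_mulmx_col2 (r : 'rV[R]_4) : (r *m M) 0 2%:R = c * r 0 2%:R.
Proof. by rewrite mulmx4 !M_col2 !mxE /=; ring. Qed.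

Lemma projects_lift P Q (s : R) : projects P Q ->
  projects (Pt (px P) (py P) (pz P + s)) (Pt (px Q) (py Q) (pz Q + c * s / proj_weight P)).
Proof.
move=> [w0 ->]; rewrite /projects /proj_weight.
have -> : Defs.hom (Pt (px P) (py P) (pz P + s)) = Defs.hom P + s *: ez R.
  by apply/matrixP => k l; rewrite !mxE; case: k => -[|[|[|[|k]]]] //= _; ring.
rewrite mulmxDr -scalemxAr M_ez scalerA; move: (M *m Defs.hom P) w0 => h w0.
by rewrite !mxE /= !mulr0 !addr0 mulr1; split => //; congr Pt; field.
Qed.

Lemma proj_row (f : 'rV[R]_4) P Q : projects P Q ->
  (f *m Defs.hom P) 0 0 / proj_weight P =
  (f *m invmx M) 0 0 * px Q + (f *m invmx M) 0 1 * py Q +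
  (f *m invmx M) 0 2%:R * pz Q + (f *m invmx M) 0 3%:R.
Proof.
move=> [w0 ->] /=; rewrite -[in LHS](mulmxKV M_unit f); set g := f *m invmx M.
by rewrite -mulmxA mulmx4 /proj_weight; field.
Qed.

Lemma proj_on_plane q e P Q (g := row4 q.1 q.2 (-1) e *m invmx M) :
  on_plane q e P -> projects P Q -> on_plane (c * g 0 0, c * g 0 1) (c * g 0 3%:R) Q.
Proof.
move=> onP /(proj_row (row4 q.1 q.2 (-1) e)); rewrite -/g row_invmx_col2 row_hom onP.
rewrite [row4 _ _ _ _ 0 _]mxE /= => h.
have hz : g 0 0 * px Q + g 0 1 * py Q + -1 / c * pz Q + g 0 3%:R = 0 by rewrite -h; ring.
have c0 := ez_scale_neq0; rewrite /on_plane /=.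
have -> : pz Q = c * (g 0 0 * px Q + g 0 1 * py Q + g 0 3%:R) -
  c * (g 0 0 * px Q + g 0 1 * py Q + -1 / c * pz Q + g 0 3%:R) by field.
by rewrite hz mulr0 subr0; ring.
Qed.

(* The image of the plane z = q.1 x + q.2 y + e through V has the row vector
   (q.1, q.2, -1, e) M^-1, whose z-coefficient is -1/c. *)
Definition dual_map (V : pt R) (q : R * R) : R * R :=
  let g := row4 q.1 q.2 (-1) (pz V - q.1 * px V - q.2 * py V) *m invmx M in
  (c * g 0 0, c * g 0 1).

Definition dual_jacobian (x y : R) : R :=
  let N := invmx M in
  c ^+ 2 * ((N 0 0 - x * N 3%:R 0) * (N 1 1 - y * N 3%:R 1) -
            (N 1 0 - y * N 3%:R 0) * (N 0 1 - x * N 3%:R 1)).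

Lemma omega4_dual_map V q0 q1 q2 q3 :
  omega4 (dual_map V q0) (dual_map V q1) (dual_map V q2) (dual_map V q3) =
  dual_jacobian (px V) (py V) * omega4 q0 q1 q2 q3.
Proof. by rewrite /omega4 /det2 /dual_map /dual_jacobian /= !mulmx4 !mxE /=; ring. Qed.

Lemma dual_top_proj (X Y : net R) a b k l :
  convex_quad (X a b) (X a.+1 b) (X a.+1 b.+1) (X a b.+1) ->
  pz (face_normal X a b) != 0 -> pz (face_normal Y a b) != 0 -> face_vertex a b k l ->
  projects (X a b) (Y a b) -> projects (X a.+1 b) (Y a.+1 b) ->
  projects (X a.+1 b.+1) (Y a.+1 b.+1) ->
  dual_top Y a b = dual_map (X k l) (dual_top X a b).
Proof.
move=> cq Xz Yz kl pA pB pC; have [e [oA oB oC oD]] := convex_quad_on_plane cq Xz.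
change (dual_point (face_normal Y a b) = dual_map (X k l) (dual_point (face_normal X a b))).
set q := dual_point (face_normal X a b) in oA oB oC oD *.
have oV : on_plane q e (X k l) by case/andP: kl => /orP[]/eqP-> /orP[]/eqP->.
have eV : e = pz (X k l) - q.1 * px (X k l) - q.2 * py (X k l) by rewrite oV; ring.
rewrite eV in oA oB oC.
exact: dual_point_on_plane (proj_on_plane oA pA) (proj_on_plane oB pB) (proj_on_plane oC pC) Yz.
Qed.

Lemma curvature_proj m n (X Y : net R) : is_net m n X ->
  (forall i j, (i < m)%N -> (j < n)%N ->
     pz (face_normal X i j) != 0 /\ pz (face_normal Y i j) != 0) ->
  (forall i j, (i <= m)%N -> (j <= n)%N -> projects (X i j) (Y i j)) ->
  forall i j, (i.+1 < m)%N -> (j.+1 < n)%N ->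
  curvature Y i.+1 j.+1 =
  dual_jacobian (px (X i.+1 j.+1)) (py (X i.+1 j.+1)) * curvature X i.+1 j.+1.
Proof.
move=> net nv pr i j im jn.
have face a b : (a < m)%N -> (b < n)%N -> face_vertex a b i.+1 j.+1 ->
    dual_top Y a b = dual_map (X i.+1 j.+1) (dual_top X a b).
  move=> am bn v; have [Xz Yz] := nv a b am bn.
  by apply: dual_top_proj (net a b am bn) Xz Yz v _ _ _; apply: pr; lia.
rewrite !curvatureE -omega4_dual_map !face ?(ltnW im) ?(ltnW jn) //;
  by rewrite /face_vertex !eqxx ?orbT.
Qed.

Lemma proj_affine_pullback (a b d : R) P Q (r := row4 a b 0 d *m M) : projects P Q ->
  (a * px Q + b * py Q + d) * proj_weight P = r 0 0 * px P + r 0 1 * py P + r 0 3%:R.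
Proof.
move=> pPQ; have w0 : proj_weight P != 0 by case: pPQ.
have rN : r *m invmx M = row4 a b 0 d by rewrite /r mulmxK.
have r2 : r 0 2%:R = 0 by rewrite /r row_mulmx_col2 mxE mulr0.
clearbody r; have := proj_row r pPQ; rewrite rN mulmx4 r2 !mxE /= => h.
have -> : a * px Q + b * py Q + d = (r 0 0 * px P + r 0 1 * py P + r 0 3%:R) / proj_weight P.
  by transitivity (a * px Q + b * py Q + 0 * pz Q + d); [ring | rewrite -h; ring].
by rewrite mulfVK.
Qed.

End ProjectiveMaps.

Section Flexion.
Variables (R : realType) (m n : nat) (F : net R) (Fam : R -> net R).
Hypothesis F_dual_convex : dual_convex m n F.
Hypothesis Fam0 : forall i j, (i <= m)%N -> (j <= n)%N -> Fam 0 i j = F i j.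
Hypothesis Fam_cont : forall i j, (i <= m)%N -> (j <= n)%N ->
  {within `[0%R, 1%R], continuous (fun t => px (Fam t i j))}%classic /\
  {within `[0%R, 1%R], continuous (fun t => py (Fam t i j))}%classic /\
  {within `[0%R, 1%R], continuous (fun t => pz (Fam t i j))}%classic.
Hypothesis Fam_face : forall t, 0 <= t <= 1 -> forall i j, (i < m)%N -> (j < n)%N ->
  exists K, face_icong F (Fam t) i j K.
Hypothesis Fam_curvature : forall t, 0 <= t <= 1 -> forall i j,
  (1 <= i < m)%N -> (1 <= j < n)%N -> curvature (Fam t) i j = curvature F i j.
Hypothesis Fam_nontrivial : ~ (forall t, 0 <= t <= 1 -> exists K : icong R,
  forall i j, (i <= m)%N -> (j <= n)%N -> Fam t i j = icong_apply K (F i j)).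

Let F_nonvertical := dual_convex_nonvertical F_dual_convex.

Definition vdisp t i j : R := pz (Fam t i j) - pz (F i j).

Lemma vdisp0 i j : (i <= m)%N -> (j <= n)%N -> vdisp 0 i j = 0.
Proof. by move=> im jn; rewrite /vdisp Fam0 // subrr. Qed.

Lemma vdisp_cont i j : (i <= m)%N -> (j <= n)%N ->
  {within `[0%R, 1%R], continuous (fun t => vdisp t i j)}%classic.
Proof.
move=> im jn; apply: within_continuousB; last exact: within_continuous_cst.
exact: (Fam_cont im jn).2.2.
Qed.

Lemma vdisp_face t i j K : face_icong F (Fam t) i j K -> forall k l, face_vertex i j k l ->
  vdisp t k l = c_c1 K * px (F k l) + c_c2 K * py (F k l) + pz (c_b K).
Proof. by move/face_icongP => f k l kl; rewrite /vdisp -(f k l kl) icong_vdisp. Qed.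

Lemma Fam_vertex_curvature t i j : 0 <= t <= 1 -> (i.+1 < m)%N -> (j.+1 < n)%N ->
  exists K0 K1 K2 K3, [/\ face_icong F (Fam t) i j K0, face_icong F (Fam t) i.+1 j K1,
    face_icong F (Fam t) i.+1 j.+1 K2, face_icong F (Fam t) i j.+1 K3 &
    curvature F i.+1 j.+1 = omega4 (add2 (dual_top F i j) (shear K0))
      (add2 (dual_top F i.+1 j) (shear K1)) (add2 (dual_top F i.+1 j.+1) (shear K2))
      (add2 (dual_top F i j.+1) (shear K3))].
Proof.
move=> t01 im jn; have im' := ltnW im; have jn' := ltnW jn.
have [K0 f0] := Fam_face t01 im' jn'; have [K1 f1] := Fam_face t01 im jn'.
have [K2 f2] := Fam_face t01 im jn; have [K3 f3] := Fam_face t01 im' jn.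
exists K0, K1, K2, K3; split=> //; rewrite -(Fam_curvature t01 (i := i.+1) (j := j.+1)) //.
exact: curvature_face_icong f0 f1 f2 f3 (F_nonvertical im' jn') (F_nonvertical im jn')
  (F_nonvertical im jn) (F_nonvertical im' jn).
Qed.

Lemma lift_vdisp_face t i j K : face_icong F (Fam t) i j K ->
  face_icong F (lift_net F (vdisp t)) i j (vshear (c_c1 K) (c_c2 K) (pz (c_b K))).
Proof. by move=> f; apply: face_icong_lift; exact: vdisp_face f. Qed.

Lemma lift_vdisp_curvature t i j : 0 <= t <= 1 -> (i.+1 < m)%N -> (j.+1 < n)%N ->
  curvature (lift_net F (vdisp t)) i.+1 j.+1 = curvature F i.+1 j.+1.
Proof.
move=> t01 im jn; have im' := ltnW im; have jn' := ltnW jn.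
have [K0 [K1 [K2 [K3 [f0 f1 f2 f3 ->]]]]] := Fam_vertex_curvature t01 im jn.
exact: curvature_face_icong (lift_vdisp_face f0) (lift_vdisp_face f1) (lift_vdisp_face f2)
  (lift_vdisp_face f3) (F_nonvertical im' jn') (F_nonvertical im jn')
  (F_nonvertical im jn) (F_nonvertical im' jn).
Qed.

Lemma lift_vdisp_net t : 0 <= t <= 1 -> is_net m n (lift_net F (vdisp t)).
Proof.
move=> t01 i j im jn; have [K f] := Fam_face t01 im jn.
exact: convex_face_icong (lift_vdisp_face f) (F_dual_convex.2.2.1 i j im jn).
Qed.

Lemma lift_vdisp_nonvertical t i j : 0 <= t <= 1 -> (i < m)%N -> (j < n)%N ->
  pz (face_normal (lift_net F (vdisp t)) i j) != 0.
Proof.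
move=> t01 im jn; have [K f] := Fam_face t01 im jn.
by rewrite (pz_face_normal_icong (lift_vdisp_face f)); exact: F_nonvertical.
Qed.

Lemma Fam_shears_vary : ~ (forall t, 0 <= t <= 1 -> exists k, forall i j K,
  (i < m)%N -> (j < n)%N -> face_icong F (Fam t) i j K -> shear K = k).
Proof.
move=> const; apply: Fam_nontrivial => t t01; have [k sk] := const t t01.
have [m2 [n2 _]] := F_dual_convex.
apply: (face_icong_global (k := k) _ _ F_nonvertical); [lia | lia |].
by move=> i j im jn; have [K f] := Fam_face t01 im jn; exists K => //; exact: sk f.
Qed.

Section Combescure.
Variable G : net R.
Hypothesis G_dual_convex : dual_convex m n G.
Hypothesis FG_combescure : combescure m n F G.

Let G_nonvertical := dual_convex_nonvertical G_dual_convex.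

Definition hratio i j := edge_ratio (psub (G i.+1 j) (G i j)) (psub (F i.+1 j) (F i j)).
Definition vratio i j := edge_ratio (psub (G i j.+1) (G i j)) (psub (F i j.+1) (F i j)).

(* The closedness of this discrete 1-form comes from the faces: there, the increments are
   those of the linear function (x, y) |-> c1 x + c2 y on the top view of G. *)
Definition comb_height t : nat -> nat -> R :=
  grid_potential (fun i j => hratio i j * (vdisp t i.+1 j - vdisp t i j))
                 (fun i j => vratio i j * (vdisp t i j.+1 - vdisp t i j)).

Lemma comb_face_edges i j : (i < m)%N -> (j < n)%N ->
  [/\ psub (G i.+1 j) (G i j) = pscale (hratio i j) (psub (F i.+1 j) (F i j)),
      psub (G i.+1 j.+1) (G i.+1 j) = pscale (vratio i.+1 j) (psub (F i.+1 j.+1) (F i.+1 j)),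
      psub (G i j.+1) (G i j) = pscale (vratio i j) (psub (F i j.+1) (F i j)) &
      psub (G i.+1 j.+1) (G i j.+1) = pscale (hratio i j.+1) (psub (F i.+1 j.+1) (F i j.+1))].
Proof.
move=> im jn; have [hpar vpar] := FG_combescure.
have [eAB eBC eAD eDC] := convex_quad_edges (F_dual_convex.2.2.1 i j im jn).
by split; apply: parallel_scale => //; [apply: hpar | apply: vpar | apply: vpar | apply: hpar];
  rewrite ?(ltnW im) ?(ltnW jn).
Qed.

Definition shear_delta K (u : pt R) : R := c_c1 K * px u + c_c2 K * py u.

Lemma comb_face_increments t i j K : (i < m)%N -> (j < n)%N -> face_icong F (Fam t) i j K ->
  [/\ hratio i j * (vdisp t i.+1 j - vdisp t i j) = shear_delta K (psub (G i.+1 j) (G i j)),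
      vratio i.+1 j * (vdisp t i.+1 j.+1 - vdisp t i.+1 j) =
        shear_delta K (psub (G i.+1 j.+1) (G i.+1 j)),
      vratio i j * (vdisp t i j.+1 - vdisp t i j) = shear_delta K (psub (G i j.+1) (G i j)) &
      hratio i j.+1 * (vdisp t i.+1 j.+1 - vdisp t i j.+1) =
        shear_delta K (psub (G i.+1 j.+1) (G i j.+1))].
Proof.
move=> im jn f; have [eAB eBC eAD eDC] := comb_face_edges im jn.
have [vA vB vC vD] := face_vertex_corners i j; have v := vdisp_face f.
by rewrite /shear_delta eAB eBC eAD eDC /= (v _ _ vA) (v _ _ vB) (v _ _ vC) (v _ _ vD);
  split; ring.
Qed.

Lemma comb_heightS1 t i j : 0 <= t <= 1 -> (i < m)%N -> (j <= n)%N ->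
  comb_height t i.+1 j = comb_height t i j + hratio i j * (vdisp t i.+1 j - vdisp t i j).
Proof.
move=> t01; apply: grid_potentialS1 => {}i {}j im jn.
have [K f] := Fam_face t01 im jn; have [-> -> -> ->] := comb_face_increments im jn f.
by rewrite /shear_delta /=; ring.
Qed.

Lemma comb_face t i j K : 0 <= t <= 1 -> (i < m)%N -> (j < n)%N -> face_icong F (Fam t) i j K ->
  face_icong G (lift_net G (comb_height t)) i j
    (vshear (c_c1 K) (c_c2 K) (comb_height t i j - (c_c1 K * px (G i j) + c_c2 K * py (G i j)))).
Proof.
move=> t01 im jn f; have [dAB dBC dAD _] := comb_face_increments im jn f.
have hB : comb_height t i.+1 j = comb_height t i j + shear_delta K (psub (G i.+1 j) (G i j)).
  by rewrite comb_heightS1 ?dAB // ltnW.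
have hD : comb_height t i j.+1 = comb_height t i j + shear_delta K (psub (G i j.+1) (G i j)).
  by rewrite /comb_height grid_potentialS2 /= dAD.
have hC : comb_height t i.+1 j.+1 =
    comb_height t i.+1 j + shear_delta K (psub (G i.+1 j.+1) (G i.+1 j)).
  by rewrite /comb_height grid_potentialS2 /= dBC.
apply: face_icong_lift => k l /andP[/orP[]/eqP-> /orP[]/eqP->];
  rewrite ?hC ?hB ?hD /shear_delta /=; ring.
Qed.

Lemma comb_dual_top i j : (i < m)%N -> (j < n)%N -> dual_top G i j = dual_top F i j.
Proof.
move=> im jn; have [eAB eBC _ _] := comb_face_edges im jn.
have eN := normal3_scale eAB eBC; have Gz := G_nonvertical im jn.
change (dual_point (face_normal G i j) = dual_point (face_normal F i j)).
by rewrite [face_normal G i j]eN dual_point_scale // -[pscale _ _]eN.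
Qed.

Lemma comb_curvature t i j : 0 <= t <= 1 -> (1 <= i < m)%N -> (1 <= j < n)%N ->
  curvature (lift_net G (comb_height t)) i j = curvature G i j.
Proof.
move=> t01; case: i => // i im; case: j => // j jn; have im' := ltnW im; have jn' := ltnW jn.
have [K0 [K1 [K2 [K3 [f0 f1 f2 f3 eF]]]]] := Fam_vertex_curvature t01 im jn.
rewrite (curvature_face_icong (comb_face t01 im' jn' f0) (comb_face t01 im jn' f1)
  (comb_face t01 im jn f2) (comb_face t01 im' jn f3) (G_nonvertical im' jn')
  (G_nonvertical im jn') (G_nonvertical im jn) (G_nonvertical im' jn)).
by rewrite curvatureE !comb_dual_top // -curvatureE eF.
Qed.

Lemma comb_height0 i j : (i <= m)%N -> (j <= n)%N -> comb_height 0 i j = 0.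
Proof.
move=> im jn; rewrite /comb_height /grid_potential !big1 ?addr0 // => -[k /= kl] _;
  rewrite !vdisp0 ?subrr ?mulr0 //; lia.
Qed.

Lemma comb_height_cont i j : (i <= m)%N -> (j <= n)%N ->
  {within `[0%R, 1%R], continuous (fun t => comb_height t i j)}%classic.
Proof.
move=> im jn; apply: within_continuous_grid_potential => k kl;
  (apply: within_continuousM; first exact: within_continuous_cst);
  by apply: within_continuousB; apply: vdisp_cont; lia.
Qed.

Lemma comb_nontrivial : ~ (forall t, 0 <= t <= 1 -> exists D : icong R,
  forall i j, (i <= m)%N -> (j <= n)%N -> lift_net G (comb_height t) i j = icong_apply D (G i j)).
Proof.
move=> triv; apply: Fam_shears_vary => t t01; have [D eD] := triv t t01.
exists (shear D) => i j K im jn f; have im' := ltnW im; have jn' := ltnW jn.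
have [eA [eB [eC _]]] := comb_face t01 im jn f.
exact: (icong_shear_eq (congr1 (@pz R) (etrans eA (eD _ _ im' jn')))
  (congr1 (@pz R) (etrans eB (eD _ _ im jn'))) (congr1 (@pz R) (etrans eC (eD _ _ im jn)))
  (G_nonvertical im jn)).
Qed.

Lemma combescure_flexible : flexible m n G.
Proof.
apply: (flexible_lift (h := comb_height)).
- exact: G_dual_convex.2.2.1.
- exact: comb_height0.
- exact: comb_height_cont.
- by move=> t t01 i j im jn; have [K f] := Fam_face t01 im jn; eexists; exact: comb_face f.
- by move=> t t01 i j; exact: comb_curvature.
- exact: comb_nontrivial.
Qed.

End Combescure.

Section DualAffine.
Variables (G : net R) (M : 'M[R]_4) (c : R).
Hypothesis G_dual_convex : dual_convex m n G.
Hypothesis M_unit : M \in unitmx.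
Hypothesis M_ez : M *m ez R = c *: ez R.
Hypothesis FG_proj : forall i j, (i <= m)%N -> (j <= n)%N -> projects M (F i j) (G i j).

Let G_nonvertical := dual_convex_nonvertical G_dual_convex.

Definition da_height t i j : R := c * vdisp t i j / proj_weight M (F i j).

Lemma da_projects t i j : (i <= m)%N -> (j <= n)%N ->
  projects M (lift_net F (vdisp t) i j) (lift_net G (da_height t) i j).
Proof. by move=> im jn; have := projects_lift M_ez (vdisp t i j) (FG_proj im jn). Qed.

Lemma da_face t i j K (g := row4 (c_c1 K) (c_c2 K) 0 (pz (c_b K)) *m invmx M) :
  face_icong F (Fam t) i j K -> (i < m)%N -> (j < n)%N ->
  face_icong G (lift_net G (da_height t)) i j (vshear (c * g 0 0) (c * g 0 1) (c * g 0 3%:R)).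
Proof.
move=> f im jn; apply: face_icong_lift => k l kl.
have [km ln] : (k <= m)%N /\ (l <= n)%N by move: kl; rewrite /face_vertex; lia.
have := proj_row M_unit (row4 (c_c1 K) (c_c2 K) 0 (pz (c_b K))) (FG_proj km ln).
rewrite row_hom -/g (row_invmx_col2 M_unit M_ez) [row4 _ _ _ _ 0 _]mxE /= !mul0r !addr0 => h.
by rewrite /da_height (vdisp_face f kl) -mulrA h; ring.
Qed.

Lemma da_nonvertical t i j : 0 <= t <= 1 -> (i < m)%N -> (j < n)%N ->
  pz (face_normal (lift_net G (da_height t)) i j) != 0.
Proof.
move=> t01 im jn; have [K f] := Fam_face t01 im jn.
by rewrite (pz_face_normal_icong (da_face f im jn)); exact: G_nonvertical.
Qed.

Lemma da_curvature t i j : 0 <= t <= 1 -> (1 <= i < m)%N -> (1 <= j < n)%N ->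
  curvature (lift_net G (da_height t)) i j = curvature G i j.
Proof.
move=> t01; case: i => // i im; case: j => // j jn.
rewrite (curvature_proj M_unit M_ez (lift_vdisp_net t01) _ (da_projects t)) //; last first.
  by move=> a b am bn; rewrite lift_vdisp_nonvertical ?da_nonvertical.
rewrite lift_vdisp_curvature // (curvature_proj M_unit M_ez F_dual_convex.2.2.1 _ FG_proj) //.
by move=> a b am bn; rewrite F_nonvertical ?G_nonvertical.
Qed.

Lemma da_nontrivial : ~ (forall t, 0 <= t <= 1 -> exists D : icong R,
  forall i j, (i <= m)%N -> (j <= n)%N -> lift_net G (da_height t) i j = icong_apply D (G i j)).
Proof.
move=> triv; apply: Fam_shears_vary => t t01; have [D eD] := triv t t01.
have c0 := ez_scale_neq0 M_unit M_ez; pose r := row4 (c_c1 D) (c_c2 D) 0 (pz (c_b D)) *m M.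
have vd k l : (k <= m)%N -> (l <= n)%N ->
    vdisp t k l = r 0 0 / c * px (F k l) + r 0 1 / c * py (F k l) + r 0 3%:R / c.
  move=> km ln; have pr := FG_proj km ln; have w0 : proj_weight M (F k l) != 0 by case: pr.
  have hD : c * vdisp t k l = (c_c1 D * px (G k l) + c_c2 D * py (G k l) + pz (c_b D)) *
      proj_weight M (F k l).
    rewrite -(mulfVK w0 (c * vdisp t k l)); congr (_ * _); apply: (addrI (pz (G k l))).
    have := congr1 (@pz R) (eD k l km ln).
    by rewrite /lift_net /da_height /icong_apply /= => ->; ring.
  by apply: (mulfI c0); rewrite hD (proj_affine_pullback M_unit M_ez _ _ _ pr) -/r; field.
exists (r 0 0 / c, r 0 1 / c) => i j K im jn f.
have hz k l : face_vertex i j k l -> pz (icong_apply K (F k l)) =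
    pz (icong_apply (vshear (r 0 0 / c) (r 0 1 / c) (r 0 3%:R / c)) (F k l)).
  move=> kl; have [km ln] : (k <= m)%N /\ (l <= n)%N by move: kl; rewrite /face_vertex; lia.
  by rewrite ((face_icongP _ _ _ _ _).1 f k l kl) vshearE /= -vd // /vdisp; ring.
have [cA cB cC _] := face_vertex_corners i j.
exact: icong_shear_eq (hz _ _ cA) (hz _ _ cB) (hz _ _ cC) (F_nonvertical im jn).
Qed.

Lemma da_height0 i j : (i <= m)%N -> (j <= n)%N -> da_height 0 i j = 0.
Proof. by move=> im jn; rewrite /da_height vdisp0 // mulr0 mul0r. Qed.

Lemma da_height_cont i j : (i <= m)%N -> (j <= n)%N ->
  {within `[0%R, 1%R], continuous (fun t => da_height t i j)}%classic.
Proof.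
move=> im jn; apply: within_continuousM; last exact: within_continuous_cst.
by apply: within_continuousM; [exact: within_continuous_cst | exact: vdisp_cont].
Qed.

Lemma dual_affine_flexible : flexible m n G.
Proof.
apply: (flexible_lift (h := da_height)).
- exact: G_dual_convex.2.2.1.
- exact: da_height0.
- exact: da_height_cont.
- by move=> t t01 i j im jn; have [K f] := Fam_face t01 im jn; eexists; exact: da_face f im jn.
- by move=> t t01 i j; exact: da_curvature.
- exact: da_nontrivial.
Qed.

End DualAffine.

End Flexion.

Theorem corollary3 (R : realType) (m n : nat) (F : net R) :
  dual_convex m n F -> flexible m n F ->
  (forall G : net R, dual_convex m n G -> combescure m n F G -> flexible m n G) /\
  (forall G : net R, dual_convex m n G -> dual_affine_image m n F G -> flexible m n G).
Proof.
move=> F_dc [Fam [Fam0 [_ [Fam_cont [Fam_face [Fam_curv Fam_nontriv]]]]]]; split.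
  move=> G G_dc FG.
  exact: (combescure_flexible F_dc Fam0 Fam_cont Fam_face Fam_curv Fam_nontriv G_dc FG).
move=> G G_dc [M [[M_unit [c M_ez]] FG]].
exact: (dual_affine_flexible F_dc Fam0 Fam_cont Fam_face Fam_curv Fam_nontriv G_dc M_unit M_ez FG).
Qed.
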